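(* Assume Assumption 1 and Assumption 2 (as defined in the context) and the null hypothesis $H_0:\ T_i(1)=T_i(0)$ for all $1\le i\le n$. Then, conditioning on all potential event times $\boldsymbol{T}(1),\boldsymbol{T}(0)$, for every time $t\ge 0$, $$\overline{D}_1(t)\mid \boldsymbol{T}(1),\boldsymbol{T}(0),\overline{N}(t),\overline{D}(t),\overline{N}_1(t)\ \sim\ \mathrm{HGeom}\big(\overline{N}(t),\overline{D}(t),\overline{N}_1(t)\big).$$
   Context: There are $n$ units. Unit $i$ has potential event times $T_i(1),T_i(0)\ge 0$ (under treatment and control), potential censoring times $C_i(1),C_i(0)\in[0,\infty]$, and treatment indicator $Z_i\in\{0,1\}$; bold letters denote the corresponding $n$-vectors. Assumption 1: conditional on $\boldsymbol{T}(1),\boldsymbol{T}(0),\boldsymbol{C}(1),\boldsymbol{C}(0)$, the $Z_i$ are i.i.d. Bernoulli$(p_1)$ with $p_1=1-p_0\in(0,1)$. Assumption 2: $(\boldsymbol{C}(1),\boldsymbol{C}(0))$ is independent of $(\boldsymbol{T}(1),\boldsymbol{T}(0))$, and the pairs $(C_i(1),C_i(0))$, $1\le i\le n$, are i.i.d. (the two components of a pair may be dependent and have different distributions). Realized quantities: $T_i=Z_iT_i(1)+(1-Z_i)T_i(0)$, $C_i=Z_iC_i(1)+(1-Z_i)C_i(0)$, $W_i=\min\{T_i,C_i\}$, $\Delta_i=\mathbb{1}(T_i\le C_i)$. For $t\ge 0$: $\overline{N}_1(t)=\sum_i Z_i\mathbb{1}(W_i\ge t)$, $\overline{N}_0(t)=\sum_i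 (1-Z_i)\mathbb{1}(W_i\ge t)$, $\overline{N}(t)=\overline{N}_1(t)+\overline{N}_0(t)$, $\overline{D}_1(t)=\sum_i Z_i\Delta_i\mathbb{1}(W_i=t)$, $\overline{D}(t)=\sum_i\Delta_i\mathbb{1}(W_i=t)$. $\mathrm{HGeom}(m,k,b)$ denotes the hypergeometric distribution of the number of successes in $b$ draws without replacement from a population of size $m$ containing exactly $k$ successes. *)

From HB Require Import structures.
From mathcomp Require Import all_boot all_order all_algebra.
From mathcomp Require Import all_classical all_reals all_analysis measurable_realfun.
Set Implicit Arguments. Unset Strict Implicit. Unset Printing Implicit Defensive.
Import Order.TTheory GRing.Theory Num.Theory.
Local Open Scope ring_scope.
Local Open Scope ereal_scope.

Section Survival.
Variables (R : realType) (Omega : Type) (n : nat).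
(* potential event times (fixed: we condition on them) *)
Variables (T1 T0 : 'I_n -> R).
(* treatment indicators Z_i and potential censoring pairs (C_i(1), C_i(0)) *)
Variables (Z : 'I_n -> Omega -> bool) (C : 'I_n -> Omega -> \bar R * \bar R).

Definition Tobs (i : 'I_n) (w : Omega) : R := if Z i w then T1 i else T0 i.
Definition Cobs (i : 'I_n) (w : Omega) : \bar R :=
  if Z i w then (C i w).1 else (C i w).2.
Definition Wobs (i : 'I_n) (w : Omega) : \bar R := mine (Tobs i w)%:E (Cobs i w).
Definition Delta (i : 'I_n) (w : Omega) : bool := (Tobs i w)%:E <= Cobs i w.

Definition Nbar1 (t : R) (w : Omega) : nat :=
  #|[set i : 'I_n | Z i w && (t%:E <= Wobs i w)]|.
Definition Nbar0 (t : R) (w : Omega) : nat :=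
  #|[set i : 'I_n | ~~ Z i w && (t%:E <= Wobs i w)]|.
Definition Nbar (t : R) (w : Omega) : nat := (Nbar1 t w + Nbar0 t w)%N.
Definition Dbar1 (t : R) (w : Omega) : nat :=
  #|[set i : 'I_n | [&& Z i w, Delta i w & Wobs i w == t%:E]]|.
Definition Dbar (t : R) (w : Omega) : nat :=
  #|[set i : 'I_n | Delta i w && (Wobs i w == t%:E)]|.
End Survival.

Definition bern_pmf (R : realType) (p1 : R) (z : bool) : R :=
  if z then p1 else (1 - p1)%R.

(* pmf of HGeom(m, k, b) at d: number of successes in b draws without
   replacement from a population of size m with exactly k successes;
   set to 0 when the parameters are not admissible (k > m or b > m). *)
Definition hgeom_pmf (R : realType) (m k b d : nat) : R :=
  if [&& (k <= m)%N, (b <= m)%N & (d <= b)%N] then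
    (('C(k, d) * 'C(m - k, b - d))%:R / ('C(m, b))%:R)%R
  else 0%R.

(* Under H0 the event times are deterministic: unit i is at risk at t iff
   t <= T_i and t <= C_i, and has an event at t iff moreover T_i = t.  Hence
   N, D, N1 and D1 are the cardinalities of the risk set S, of S :&: E (where E
   is the set of units with T_i = t), of U :&: S and of U :&: S :&: E (where U
   is the set of treated units).  By Assumptions 1 and 2 the law of the pair
   (uncensored set, U) is a product over units, and within S the factor of a
   unit only depends on whether it is treated.  (The two factors p1 P(t <= C(1))
   and p0 P(t <= C(0)) differ in general, which does not matter.)  So, given S
   and |U :&: S| = N1, the set U :&: S is a uniformly random N1-subset of S, and
   |U :&: S :&: E| is hypergeometric. *)

From HB Require Import structures.
From mathcomp Require Import all_boot all_order all_algebra.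
From mathcomp Require Import all_classical all_reals all_analysis measurable_realfun.
Set Implicit Arguments. Unset Strict Implicit. Unset Printing Implicit Defensive.
Import Order.TTheory GRing.Theory Num.Theory.
Local Open Scope ring_scope.

Section SubsetSums.
Variable I : finType.
Implicit Types (S E A B U : {set I}).

Lemma setU_compl_parts {A B E} : A \subset E -> B \subset ~: E ->
  (A :|: B) :&: E = A /\ (A :|: B) :\: E = B.
Proof.
move=> sAE sBE; have dBE : [disjoint B & E] by rewrite finset.disjoints_subset.
have AE0 : A :\: E = finset.set0 by apply/eqP; rewrite finset.setD_eq0.
have BE0 : B :&: E = finset.set0 by apply/eqP; rewrite setI_eq0.
rewrite finset.setIUl finset.setDUl (finset.setIidPl sAE) (finset.setDidPl dBE).
by rewrite BE0 AE0 finset.setU0 finset.set0U.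
Qed.

Lemma card_draws_setI S E b x : (x <= b)%N ->
  #|[set A : {set I} | [&& A \subset S, #|A| == b & #|A :&: E| == x]]|
  = ('C(#|S :&: E|, x) * 'C(#|S :\: E|, b - x))%N.
Proof.
move=> xb.
pose D := finset.setX [set A : {set I} | A \subset S :&: E & #|A| == x]
                      [set A : {set I} | A \subset S :\: E & #|A| == (b - x)%N].
have parts_inv p : p \in D -> (p.1 :|: p.2) :&: E = p.1 /\ (p.1 :|: p.2) :\: E = p.2.
  case: p => A1 A2; rewrite !inE /= => /andP[/andP[s1 _] /andP[s2 _]].
  apply: setU_compl_parts; first exact: fintype.subset_trans s1 (subsetIr _ _).
  by apply: fintype.subset_trans s2 _; rewrite finset.setDE subsetIr.
have -> : [set A : {set I} | [&& A \subset S, #|A| == b & #|A :&: E| == x]]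
          = [set p.1 :|: p.2 | p in D].
  apply/setP=> A; rewrite inE; apply/idP/imsetP.
    case/and3P=> sAS /eqP cA /eqP cAE; exists (A :&: E, A :\: E); last by rewrite setID.
    by rewrite !inE finset.setSI // finset.setSD //= cAE cardsD cA cAE !eqxx.
  case=> p Dp ->; have [e1 e2] := parts_inv p Dp; move: Dp.
  rewrite !inE => /andP[/andP[s1 /eqP c1] /andP[s2 /eqP c2]].
  rewrite e1 c1 eqxx finset.subUset.
  rewrite (fintype.subset_trans s1 (subsetIl _ _)) (fintype.subset_trans s2 (subsetDl _ _)).
  by rewrite -(cardsID E) e1 e2 c1 c2 subnKC // eqxx.
rewrite finset.card_in_imset ?cardsX ?cards_draws // => -[A1 A2] [B1 B2] DA DB /= e.
have [a1 a2] := parts_inv _ DA; have [b1 b2] := parts_inv _ DB.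
by rewrite /= e in a1 a2; rewrite -a1 -a2 b1 b2.
Qed.

Lemma sum_subsets_split (R : pzSemiRingType) S (F G : {set I} -> R) :
  \sum_U F (U :&: S) * G (U :\: S) =
  (\sum_(A : {set I} | A \subset S) F A) * (\sum_(B : {set I} | B \subset ~: S) G B).
Proof.
rewrite mulr_suml; under [RHS]eq_bigr do rewrite mulr_sumr.
rewrite pair_big_dep (reindex_onto (fun p => p.1 :|: p.2) (fun U => (U :&: S, U :\: S))) /=;
  last by move=> U _; rewrite setID.
apply: eq_big => [[A B]|[A B] /eqP[-> ->]] //=.
apply/eqP/andP => [[<- <-]|[sA sB]]; first by rewrite subsetIr finset.setDE subsetIr.
by have [-> ->] := setU_compl_parts sA sB.
Qed.

Lemma prod_set_indicator (R : comPzSemiRingType) S U (h : bool -> R) :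
  \prod_(i in S) h (i \in U) = h true ^+ #|U :&: S| * h false ^+ (#|S| - #|U :&: S|).
Proof.
rewrite (big_setID U) /=.
rewrite (eq_bigr (fun=> h true)); last by move=> i /setIP[_ ->].
rewrite [X in _ * X](eq_bigr (fun=> h false)); last first.
  by move=> i; rewrite inE => /andP[/negbTE -> _].
by rewrite !prodr_const cardsD finset.setIC.
Qed.

Lemma sum_subsets_cond (R : pzSemiRingType) S (P : pred {set I}) (c : R) (G : {set I} -> R) :
  \sum_U (if P (U :&: S) then c * G (U :\: S) else 0)
  = c *+ #|[set A : {set I} | (A \subset S) && P A]| * \sum_(B : {set I} | B \subset ~: S) G B.
Proof.
transitivity (\sum_U (if P (U :&: S) then c else 0) * G (U :\: S)).
  by apply: eq_bigr => U _; case: ifP; rewrite ?mul0r.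
rewrite (sum_subsets_split S (fun A => if P A then c else 0)) -big_mkcondr /= -sumr_const.
by congr (_ * _); apply: eq_bigl => A; rewrite inE.
Qed.

Lemma card_draws_setI_hgeom (R : realType) S E b x :
  (#|[set A : {set I} | [&& A \subset S, #|A| == b & #|A :&: E| == x]]|%:R : R)
  = hgeom_pmf R #|S| #|S :&: E| b x * #|[set A : {set I} | A \subset S & #|A| == b]|%:R.
Proof.
rewrite cards_draws /hgeom_pmf.
have kS : (#|S :&: E| <= #|S|)%N by rewrite subset_leq_card ?subsetIl.
have [bS|Sb] := leqP b #|S|; last first.
  rewrite andbF mul0r; apply/eqP; rewrite pnatr_eq0 -leqn0 -(bin_small Sb) -cards_draws.
  by apply: subset_leq_card; apply/fintype.subsetP => A; rewrite !inE => /and3P[-> -> _].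
have [xb|bx] := leqP x b; last first.
  rewrite !andbF mul0r; apply/eqP; rewrite pnatr_eq0 cards_eq0; apply/eqP/setP => A.
  rewrite !inE; apply/negbTE/and3P => -[_ /eqP cA /eqP cAE].
  by move: (subset_leq_card (subsetIl A E)); rewrite cA cAE leqNgt bx.
by rewrite kS card_draws_setI // cardsD divfK // pnatr_eq0 -lt0n bin_gt0.
Qed.

Lemma sum_exchangeable_hgeom (R : realType) S E (F : nat -> R) (G : {set I} -> R) b x :
  \sum_U (if (#|U :&: S| == b) && (#|U :&: S :&: E| == x)
          then F #|U :&: S| * G (U :\: S) else 0)
  = hgeom_pmf R #|S| #|S :&: E| b x *
    \sum_U (if #|U :&: S| == b then F #|U :&: S| * G (U :\: S) else 0).
Proof.
have fix_size (P : pred {set I}) : (forall A, P A -> #|A| = b) ->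
    \sum_U (if P (U :&: S) then F #|U :&: S| * G (U :\: S) else 0)
    = \sum_U (if P (U :&: S) then F b * G (U :\: S) else 0).
  by move=> Pb; apply: eq_bigr => U _; case: ifP => // /Pb ->.
rewrite (fix_size (fun A => (#|A| == b) && (#|A :&: E| == x))); last by move=> A /andP[/eqP].
rewrite (fix_size (fun A => #|A| == b)); last by move=> A /eqP.
rewrite (sum_subsets_cond _ (fun A => (#|A| == b) && (#|A :&: E| == x))).
rewrite (sum_subsets_cond _ (fun A => #|A| == b)).
rewrite -![F b *+ _]mulr_natr card_draws_setI_hgeom.
by rewrite [in LHS]mulrCA -[LHS]mulrA.
Qed.

Lemma sum_product_weight_hgeom (R : realType) (L E : {set I}) (h : bool -> bool -> R) m k b x :
  \sum_(p : {set I} * {set I} | [&& #|p.1 :&: L| == m, #|p.1 :&: L :&: E| == k,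
                                   #|p.2 :&: (p.1 :&: L)| == b
                                 & #|p.2 :&: (p.1 :&: L) :&: E| == x])
     \prod_i h (i \in p.2) (i \in p.1)
  = hgeom_pmf R m k b x *
    \sum_(p : {set I} * {set I} | [&& #|p.1 :&: L| == m, #|p.1 :&: L :&: E| == k
                                   & #|p.2 :&: (p.1 :&: L)| == b])
     \prod_i h (i \in p.2) (i \in p.1).
Proof.
have sum_pairE (w : {set I} * {set I} -> R) : \sum_p w p = \sum_V \sum_U w (V, U).
  by rewrite pair_bigA; apply: eq_bigr => -[].
rewrite [LHS]big_mkcond [in RHS]big_mkcond !sum_pairE /= mulr_sumr.
apply: eq_bigr => V _; set S := V :&: L.
have [/andP[/eqP <- /eqP <-]|not_mk] := boolP ((#|S| == m) && (#|S :&: E| == k)); last first.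
  by rewrite !big1 ?mulr0 // => U _; case/nandP: not_mk => /negbTE->; rewrite /= ?andbF.
pose F a := h true true ^+ a * h false true ^+ (#|S| - a).
pose G B := \prod_(i in ~: S) h (i \in B) (i \in V).
(* Units of S are uncensored, so their factor only depends on being treated. *)
have weight U : \prod_i h (i \in U) (i \in V) = F #|U :&: S| * G (U :\: S).
  rewrite (bigID (mem S)) /=; congr (_ * _).
    rewrite (eq_bigr (fun i => h (i \in U) true)) => [|i /setIP[-> _] //].
    exact: (prod_set_indicator S U (h^~ true)).
  by apply: eq_big => i; rewrite !inE // => /negbTE ->.
rewrite !eqxx /=; under eq_bigr do rewrite weight; under [in RHS]eq_bigr do rewrite weight.
exact: sum_exchangeable_hgeom.
Qed.
End SubsetSums.

Lemma lee_mine_eq (R : realType) (a t : R) (c : \bar R) :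
  ((a%:E <= c)%E && (mine a%:E c == t%:E)) = [&& (t%:E <= c)%E, t <= a & a == t].
Proof.
case: (eqVneq a t) => [<-|nat].
  by rewrite lexx andbT; case: leP => // _; rewrite eqxx.
by rewrite !andbF; case: leP => // _; rewrite eqe (negbTE nat).
Qed.

Section NullHypothesisCounts.
Variables (R : realType) (Omega : Type) (n : nat) (T1 T0 : 'I_n -> R).
Variables (Z : 'I_n -> Omega -> bool) (C : 'I_n -> Omega -> \bar R * \bar R).
Hypothesis H0 : forall i, T1 i = T0 i.
Variable t : R.

Definition event_after : {set 'I_n} := [set i | t <= T1 i].
Definition event_at : {set 'I_n} := [set i | T1 i == t].
Definition treated (w : Omega) : {set 'I_n} := [set i | Z i w].
Definition uncensored (w : Omega) : {set 'I_n} := [set i | (t%:E <= Cobs Z C i w)%E].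

Lemma Wobs_H0 i w : Wobs T1 T0 Z C i w = mine (T1 i)%:E (Cobs Z C i w).
Proof. by rewrite /Wobs /Tobs -H0 if_same. Qed.

Lemma at_risk_H0 i w :
  (t%:E <= Wobs T1 T0 Z C i w)%E = (t%:E <= Cobs Z C i w)%E && (t <= T1 i).
Proof. by rewrite Wobs_H0 le_min lee_fin andbC. Qed.

Lemma event_H0 i w : Delta T1 T0 Z C i w && (Wobs T1 T0 Z C i w == t%:E)
  = [&& (t%:E <= Cobs Z C i w)%E, t <= T1 i & T1 i == t].
Proof. by rewrite /Delta /Tobs -H0 if_same Wobs_H0 lee_mine_eq. Qed.

Lemma Nbar1_H0 w : Nbar1 T1 T0 Z C t w = #|treated w :&: (uncensored w :&: event_after)|.
Proof. by apply: eq_card => i; rewrite !inE at_risk_H0. Qed.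

Lemma Nbar_H0 w : Nbar T1 T0 Z C t w = #|uncensored w :&: event_after|.
Proof.
rewrite /Nbar -(cardsID (treated w)) Nbar1_H0 finset.setIC; congr (_ + _)%N.
by apply: eq_card => i; rewrite !inE at_risk_H0 andbC.
Qed.

Lemma Dbar_H0 w : Dbar T1 T0 Z C t w = #|uncensored w :&: event_after :&: event_at|.
Proof. by apply: eq_card => i; rewrite !inE event_H0 andbA. Qed.

Lemma Dbar1_H0 w :
  Dbar1 T1 T0 Z C t w = #|treated w :&: (uncensored w :&: event_after) :&: event_at|.
Proof. by apply: eq_card => i; rewrite !inE event_H0 !andbA. Qed.

End NullHypothesisCounts.

Local Open Scope classical_set_scope.

Lemma measure_preimage_fin d (T : measurableType d) (R : realType)
    (mu : {measure set T -> \bar R}) (J : finType) (f : T -> J) (Q : pred J) :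
  (forall j, measurable [set w | f w = j]) ->
  mu [set w | Q (f w)] = (\sum_(j | Q j) mu [set w | f w = j])%E.
Proof.
move=> mf; have -> : [set w | Q (f w)] = \bigcup_(j in [set j | Q j]) [set w | f w = j].
  by apply/seteqP; split=> [w /= Qw|w [j /= Qj ->]] //; exists (f w).
rewrite measure_fin_bigcup //; [|exact: finite_finset|by move=> i j _ _ [w [<- <-]]].
by rewrite [in RHS]bigfs ?index_enum_uniq // => j _; rewrite mem_index_enum.
Qed.

Section CensoringProfile.
Variables (R : realType) (d : measure_display) (Omega : measurableType d).
Variables (P : probability Omega R) (n : nat) (p1 t : R).
Variables (Z : 'I_n -> Omega -> bool) (C : 'I_n -> Omega -> \bar R * \bar R).
Hypothesis mZ : forall i, measurable [set w | Z i w].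
Hypothesis mC : forall i, measurable_fun setT (C i).

Definition cens_event (z r : bool) : set (\bar R * \bar R) :=
  [set c | (t%:E <= (if z then c.1 else c.2))%E = r].

Lemma measurable_cens_event z r : measurable (cens_event z r).
Proof.
have mr : measurable [set e : \bar R | (t%:E <= e)%E = r].
  have mge : measurable [set e : \bar R | (t%:E <= e)%E].
    have -> : [set e : \bar R | (t%:E <= e)%E] = [set` `[t%:E, +oo[%R].
      by apply/seteqP; split=> e /=; rewrite in_itv /= andbT.
    exact: emeasurable_itv.
  case: r => //.
  have -> : [set e : \bar R | (t%:E <= e)%E = false] = ~` [set e | (t%:E <= e)%E].
    by apply/seteqP; split=> e /=; case: (t%:E <= e)%E.
  exact: measurableC.
case: z.
  by have := measurable_fst (T2 := \bar R) measurableT _ mr; rewrite setTI.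
by have := measurable_snd (T1 := \bar R) measurableT _ mr; rewrite setTI.
Qed.

Lemma measurable_cens_preimage i z r : measurable [set w | cens_event z r (C i w)].
Proof. by have := mC i measurableT (measurable_cens_event z r); rewrite setTI. Qed.

Lemma cens_event_common_law :
  (forall i j A, measurable A -> P [set w | A (C i w)] = P [set w | A (C j w)]) ->
  exists q : bool -> bool -> R,
    forall i z r, P [set w | cens_event z r (C i w)] = (q z r)%:E.
Proof.
move=> ident; case: (pickP (@predT 'I_n)) => [i0 _|none]; last first.
  by exists (fun _ _ => 0) => i; have := none i.
exists (fun z r => fine (P [set w | cens_event z r (C i0 w)])) => i z r.
rewrite (ident i i0 _ (measurable_cens_event z r)) fineK // fin_num_measure //.
exact: measurable_cens_preimage.
Qed.

Definition risk_profile (w : Omega) := (uncensored Z C t w, treated Z w).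

Lemma risk_profileE V U : [set w | risk_profile w = (V, U)] =
  \bigcap_(i in [set: 'I_n])
     ([set w | Z i w = (i \in U)] `&` [set w | cens_event (i \in U) (i \in V) (C i w)]).
Proof.
apply/seteqP; split=> w /=.
  by move=> [<- <-] i _; rewrite !inE.
by move=> Hw; congr pair; apply/setP => i; have [Zi Ci] := Hw i I; rewrite !inE /Cobs Zi.
Qed.

Lemma measurable_risk_profile p : measurable [set w | risk_profile w = p].
Proof.
case: p => V U; rewrite risk_profileE; apply: fin_bigcap_measurable => // i _.
apply: measurableI; last exact: measurable_cens_preimage.
case: (i \in U); first exact: mZ.
have -> : [set w | Z i w = false] = ~` [set w | Z i w].
  by apply/seteqP; split=> w /=; case: (Z i w).
exact: measurableC.
Qed.

Lemma risk_profile_law (q : bool -> bool -> R) :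
  (forall (z : 'I_n -> bool) (A : 'I_n -> set (\bar R * \bar R)),
     (forall i, measurable (A i)) ->
     P [set w | forall i, Z i w = z i /\ A i (C i w)]
     = ((\prod_(i < n) bern_pmf p1 (z i))%:E
        * \prod_(i < n) P [set w | A i (C i w)])%E) ->
  (forall i z r, P [set w | cens_event z r (C i w)] = (q z r)%:E) ->
  forall p, P [set w | risk_profile w = p]
            = (\prod_i (bern_pmf p1 (i \in p.2) * q (i \in p.2) (i \in p.1)))%:E.
Proof.
move=> indep Pq [V U]; rewrite risk_profileE /=.
have -> : \bigcap_(i in [set: 'I_n]) ([set w | Z i w = (i \in U)]
           `&` [set w | cens_event (i \in U) (i \in V) (C i w)])
    = [set w | forall i, Z i w = (i \in U) /\ cens_event (i \in U) (i \in V) (C i w)].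
  by apply/seteqP; split=> w /= Hw i; [exact: Hw | move=> _; exact: Hw].
rewrite (indep (fun i => i \in U) (fun i => cens_event (i \in U) (i \in V))) => [|i].
  by under [X in (_ * X)%E]eq_bigr do rewrite Pq; rewrite prodEFin -EFinM -big_split.
exact: measurable_cens_event.
Qed.
End CensoringProfile.

Theorem theorem1 (R : realType) (d : measure_display) (Omega : measurableType d)
  (P : probability Omega R) (n : nat) (p1 : R)
  (T1 T0 : 'I_n -> R) (Z : 'I_n -> Omega -> bool)
  (C : 'I_n -> Omega -> \bar R * \bar R) :
  (0 < p1 < 1) ->
  (* event times are nonnegative; censoring times lie in [0, +oo] *)
  (forall i, 0 <= T1 i) -> (forall i, 0 <= T0 i) ->
  (forall i w, (0 <= (C i w).1)%E /\ (0 <= (C i w).2)%E) ->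
  (* measurability *)
  (forall i, measurable [set w | Z i w]) ->
  (forall i, measurable_fun setT (C i)) ->
  (* Assumptions 1 and 2 (given T(1), T(0)): Z_1..Z_n i.i.d. Bernoulli(p1),
     independent of the censoring pairs, which are mutually independent ... *)
  (forall (z : 'I_n -> bool) (A : 'I_n -> set (\bar R * \bar R)),
     (forall i, measurable (A i)) ->
     P [set w | forall i, Z i w = z i /\ A i (C i w)]
     = ((\prod_(i < n) bern_pmf p1 (z i))%:E
        * \prod_(i < n) P [set w | A i (C i w)])%E) ->
  (* ... and identically distributed *)
  (forall i j (A : set (\bar R * \bar R)), measurable A ->
     P [set w | A (C i w)] = P [set w | A (C j w)]) ->
  (* null hypothesis H0 *)
  (forall i, T1 i = T0 i) ->
  forall t : R, 0 <= t ->
  forall m k b x : nat,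
    P [set w | [/\ Dbar1 T1 T0 Z C t w = x, Nbar T1 T0 Z C t w = m,
                   Dbar T1 T0 Z C t w = k & Nbar1 T1 T0 Z C t w = b]]
    = ((hgeom_pmf R m k b x)%:E
       * P [set w | [/\ Nbar T1 T0 Z C t w = m, Dbar T1 T0 Z C t w = k
                      & Nbar1 T1 T0 Z C t w = b]])%E.
Proof.
move=> _ _ _ _ mZ mC indep ident H0 t _ m k b x.
have [q Pq] := cens_event_common_law t mC ident.
pose L := event_after T1 t; pose E := event_at T1 t.
pose Q1 (p : {set 'I_n} * {set 'I_n}) := [&& #|p.1 :&: L| == m, #|p.1 :&: L :&: E| == k,
  #|p.2 :&: (p.1 :&: L)| == b & #|p.2 :&: (p.1 :&: L) :&: E| == x].
pose Q2 (p : {set 'I_n} * {set 'I_n}) := [&& #|p.1 :&: L| == m, #|p.1 :&: L :&: E| == k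
  & #|p.2 :&: (p.1 :&: L)| == b].
have counts := (Nbar_H0 Z C H0, Dbar_H0 Z C H0, Nbar1_H0 Z C H0, Dbar1_H0 Z C H0).
have -> : [set w | [/\ Dbar1 T1 T0 Z C t w = x, Nbar T1 T0 Z C t w = m,
                       Dbar T1 T0 Z C t w = k & Nbar1 T1 T0 Z C t w = b]]
          = [set w | Q1 (risk_profile t Z C w)].
  apply/seteqP; split=> w; rewrite /= /Q1 /L /E /= !counts.
    by case=> -> -> -> ->; rewrite !eqxx.
  by case/and4P=> /eqP-> /eqP-> /eqP-> /eqP->.
have -> : [set w | [/\ Nbar T1 T0 Z C t w = m, Dbar T1 T0 Z C t w = k
                     & Nbar1 T1 T0 Z C t w = b]] = [set w | Q2 (risk_profile t Z C w)].
  apply/seteqP; split=> w; rewrite /= /Q2 /L /E /= !counts.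
    by case=> -> -> ->; rewrite !eqxx.
  by case/and3P=> /eqP-> /eqP-> /eqP->.
rewrite !(measure_preimage_fin _ _ (measurable_risk_profile t mZ mC)).
rewrite !(eq_bigr _ (fun p _ => risk_profile_law indep Pq p)) !sumEFin -EFinM.
by congr EFin; apply: (sum_product_weight_hgeom L E (fun z r => bern_pmf p1 z * q z r)).
Qed.
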